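(* Let $V$ be a vector configuration with $\operatorname{codeg}^*(V)\ge1$. Then there is a totally cyclic subconfiguration $W\subseteq V$ with $\operatorname{codeg}^*(W)=\operatorname{codeg}^*(V)$.
   Context: A vector configuration is a finite family (repetitions allowed) of vectors in $\mathbb{R}^r$; a subconfiguration is a subfamily; cardinalities count multiplicities. A configuration $W$ is totally cyclic if there exist real numbers $\lambda_w>0$, $w\in W$, with $\sum_{w\in W}\lambda_w w=0$. For a nonzero linear functional $f$ on $\mathbb{R}^r$ let $H=\{f=0\}$, $\overline{H}^-=\{f\le0\}$. The dual codegree is $\operatorname{codeg}^*(X)=\min_H|\overline{H}^-\cap X|$, the minimum over all such oriented linear hyperplanes $H$. *)

From HB Require Import structures.
From mathcomp Require Import all_boot all_order all_algebra.
From mathcomp Require Import reals.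
Set Implicit Arguments. Unset Strict Implicit. Unset Printing Implicit Defensive.
Import Order.TTheory GRing.Theory Num.Theory.
Local Open Scope ring_scope.

(* A vector configuration in R^r with n members (repetitions allowed) is a
   family V : 'I_n -> 'rV[R]_r; a subconfiguration is given by a set of
   indices S : {set 'I_n}. *)

Definition lfun (R : realType) (r : nat) (c x : 'rV[R]_r) : R :=
  \sum_(j < r) c ord0 j * x ord0 j.

(* |H^- closed ∩ X| for H = {f = 0}, f given by c, X = subconfiguration S *)
Definition neg_count (R : realType) (r n : nat) (V : 'I_n -> 'rV[R]_r)
    (S : {set 'I_n}) (c : 'rV[R]_r) : nat :=
  #|[set i in S | lfun c (V i) <= 0]|.

Definition dual_codeg_is (R : realType) (r n : nat) (V : 'I_n -> 'rV[R]_r)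
    (S : {set 'I_n}) (k : nat) : Prop :=
  (exists c : 'rV[R]_r, c != 0 /\ neg_count V S c = k) /\
  (forall c : 'rV[R]_r, c != 0 -> (k <= neg_count V S c)%N).

Definition totally_cyclic (R : realType) (r n : nat) (V : 'I_n -> 'rV[R]_r)
    (S : {set 'I_n}) : Prop :=
  exists lambda : 'I_n -> R,
    (forall i, i \in S -> 0 < lambda i) /\ \sum_(i in S) lambda i *: V i = 0.

(* A vector lies in the cyclic part W of V if it occurs with positive weight in
   some nonnegative linear dependence of V; summing such dependences shows that
   W is totally cyclic. By Farkas' lemma every vector outside W is strictly
   positive on some functional that is nonnegative on V; the sum C of these
   functionals is nonnegative on V and positive exactly off W. For f <> 0 and
   t large, the closed negative halfspace of t C + f meets V only inside
   {i in W | f (V i) <= 0}, so codeg^*(W) >= codeg^*(V); the reverse inequality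
   holds because W is a subconfiguration of V. *)
From HB Require Import structures.
From mathcomp Require Import all_boot all_order all_algebra.
From mathcomp Require Import reals boolp.
From mathcomp Require Import lra.
Set Implicit Arguments. Unset Strict Implicit. Unset Printing Implicit Defensive.
Import Order.TTheory GRing.Theory Num.Theory.
Local Open Scope ring_scope.

Section Bilinear.
Variables (R : realType) (r : nat).
Implicit Types (c x y : 'rV[R]_r).

Lemma lfunC c x : lfun c x = lfun x c.
Proof. by apply: eq_bigr => j _; rewrite mulrC. Qed.

Lemma lfunDr c x y : lfun c (x + y) = lfun c x + lfun c y.
Proof. by rewrite /lfun -big_split; apply: eq_bigr => j _; rewrite mxE mulrDr. Qed.

Lemma lfunZr c a x : lfun c (a *: x) = a * lfun c x.
Proof. by rewrite /lfun big_distrr; apply: eq_bigr => j _; rewrite mxE mulrCA. Qed.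

Lemma lfunNr c x : lfun c (- x) = - lfun c x.
Proof. by rewrite -scaleN1r lfunZr mulN1r. Qed.

Lemma lfunBr c x y : lfun c (x - y) = lfun c x - lfun c y.
Proof. by rewrite lfunDr lfunNr. Qed.

Lemma lfunDl c x y : lfun (x + y) c = lfun x c + lfun y c.
Proof. by rewrite !(lfunC _ c) lfunDr. Qed.

Lemma lfunZl c a x : lfun (a *: x) c = a * lfun x c.
Proof. by rewrite !(lfunC _ c) lfunZr. Qed.

Lemma lfunBl c x y : lfun (x - y) c = lfun x c - lfun y c.
Proof. by rewrite !(lfunC _ c) lfunBr. Qed.

Lemma lfun_suml c I (s : seq I) (P : pred I) (F : I -> 'rV[R]_r) :
  lfun (\sum_(i <- s | P i) F i) c = \sum_(i <- s | P i) lfun (F i) c.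
Proof.
elim/big_rec2: _ => [|i y1 y2 _ <-]; last by rewrite lfunDl.
by rewrite -(scale0r 0) lfunZl mul0r.
Qed.

Lemma lfun_self_gt0 x : x != 0 -> 0 < lfun x x.
Proof.
move=> x_neq0; have [j xj_neq0] : exists j, x ord0 j != 0.
  apply/existsP; apply: contraR x_neq0; rewrite negb_exists => /forallP x0.
  by apply/eqP/rowP => j; rewrite mxE; apply/eqP; rewrite -[_ == _]negbK x0.
rewrite /lfun (bigD1 j) //=; apply: ltr_pwDl; first by rewrite -expr2 exprn_even_gt0.
by apply: sumr_ge0 => i _; rewrite -expr2 sqr_ge0.
Qed.

End Bilinear.

Definition in_cone (R : realType) (r m : nat) (a : 'I_m -> 'rV[R]_r)
    (b : 'rV[R]_r) : Prop :=
  exists lam : 'I_m -> R, (forall i, 0 <= lam i) /\ b = \sum_i lam i *: a i.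

Definition separates (R : realType) (r m : nat) (y : 'rV[R]_r)
    (a : 'I_m -> 'rV[R]_r) (b : 'rV[R]_r) : Prop :=
  (forall i, 0 <= lfun y (a i)) /\ lfun y b < 0.

(* Fourier-Motzkin elimination of [a ord0] along a functional [y] that
   separates [b] from the remaining generators but is negative on [a ord0]:
   the eliminated system [a'], [b'] lives in the kernel of [y]. *)
Section Elimination.
Variables (R : realType) (r m : nat) (a : 'I_m.+1 -> 'rV[R]_r) (b y : 'rV[R]_r).
Hypotheses (y_a0 : lfun y (a ord0) < 0) (y_sep : separates y (a \o lift ord0) b).

Let al := lfun y (a ord0).
Let a' (i : 'I_m) := al *: a (lift ord0 i) - lfun y (a (lift ord0 i)) *: a ord0.
Let b' := al *: b - lfun y b *: a ord0.

Lemma in_cone_eliminated : in_cone a' b' -> in_cone a b.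
Proof.
case=> mu [mu_ge0 b'E]; have al_neq0 : al != 0 by rewrite ltr0_neq0.
set Y := \sum_i mu i * lfun y (a (lift ord0 i)).
exists (fun k => oapp mu ((lfun y b - Y) / al) (unlift ord0 k)); split.
  move=> k; case: (unliftP ord0 k) => [i _|_] //=; apply: mulr_le0; last first.
    by rewrite invr_le0 ltW.
  rewrite subr_le0; apply: le_trans (ltW y_sep.2) _.
  by apply: sumr_ge0 => i _; apply: mulr_ge0 => //; apply: y_sep.1.
rewrite big_ord_recl unlift_none /=.
under eq_bigr do rewrite liftK /=.
have a'E : \sum_i mu i *: a' i = al *: \sum_i mu i *: a (lift ord0 i) - Y *: a ord0.
  rewrite scaler_sumr scaler_suml -sumrB; apply: eq_bigr => i _.
  by rewrite scalerBr !scalerA mulrC.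
apply: (scalerI al_neq0); rewrite scalerDr scalerA mulrC divfK // scalerBl.
move/eqP: b'E; rewrite a'E subr_eq => /eqP ->.
by rewrite addrC addrA addrAC.
Qed.

Lemma separates_eliminated z :
  separates z a' b' -> separates (al *: z - lfun z (a ord0) *: y) a b.
Proof.
case=> z_a' z_b'; split.
  move=> i; case: (unliftP ord0 i) => [j ->|->]; last first.
    by rewrite lfunBl !lfunZl mulrC subrr.
  by move: (z_a' j); rewrite lfunBl !lfunZl lfunBr !lfunZr (mulrC (lfun z _)).
by move: z_b'; rewrite lfunBl !lfunZl lfunBr !lfunZr (mulrC (lfun y b)).
Qed.

Lemma farkas_elimination :
  (forall (c : 'I_m -> 'rV[R]_r) d, in_cone c d \/ exists z, separates z c d) ->
  in_cone a b \/ exists w, separates w a b.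
Proof.
move=> /(_ a' b') [cone|[z z_sep]]; first by left; apply: in_cone_eliminated.
by right; eexists; apply: separates_eliminated z_sep.
Qed.

End Elimination.

Lemma farkas (R : realType) (r m : nat) (a : 'I_m -> 'rV[R]_r) (b : 'rV[R]_r) :
  in_cone a b \/ exists y, separates y a b.
Proof.
elim: m a b => [|m IHm] a b.
  have [->|b_neq0] := eqVneq b 0.
    by left; exists (fun=> 0); rewrite big_ord0.
  right; exists (- b); split; first by case.
  by rewrite lfunC lfunNr oppr_lt0 lfun_self_gt0.
have [[lam [lam_ge0 bE]]|[y y_sep]] := IHm (a \o lift ord0) b.
  left; exists (fun k => oapp lam 0 (unlift ord0 k)); split.
    by move=> k; case: (unliftP ord0 k) => [j _|_] /=.
  rewrite big_ord_recl unlift_none scale0r add0r bE.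
  by apply: eq_bigr => i _; rewrite liftK.
have [y_a0|y_a0] := leP 0 (lfun y (a ord0)).
  right; exists y; split; last exact: y_sep.2.
  by move=> i; case: (unliftP ord0 i) => [j ->|->] //; apply: y_sep.1.
exact: farkas_elimination y_a0 y_sep IHm.
Qed.

Section CyclicPart.
Variables (R : realType) (r n : nat) (V : 'I_n -> 'rV[R]_r).

Definition dependent_at (e : 'I_n) : Prop :=
  exists lam : 'I_n -> R,
    [/\ forall i, 0 <= lam i, 0 < lam e & \sum_i lam i *: V i = 0].

Definition cyclic_part : {set 'I_n} := [set e | `[< dependent_at e >]].

Lemma cyclic_partP e : reflect (dependent_at e) (e \in cyclic_part).
Proof. by rewrite inE; apply: asboolP. Qed.

Lemma dependent_at_or_separated e :
  dependent_at e \/ exists c, (forall i, 0 <= lfun c (V i)) /\ 0 < lfun c (V e).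
Proof.
have [[lam [lam_ge0 VeE]]|[y [y_ge0 y_Ve]]] := farkas V (- V e); [left | right].
  exists (fun i => lam i + (i == e)%:R); split.
  - by move=> i; rewrite addr_ge0 ?ler0n.
  - by rewrite eqxx ltr_pwDr ?ltr01.
  under eq_bigr do rewrite scalerDl.
  rewrite big_split /= -VeE (bigD1 e) //= eqxx scale1r big1 ?addr0 ?addNr //.
  by move=> i /negPf ->; rewrite scale0r.
by exists y; split=> //; rewrite lfunNr oppr_lt0 in y_Ve.
Qed.

Lemma dependence_vanishes_off_cyclic_part (lam : 'I_n -> R) i :
  (forall j, 0 <= lam j) -> \sum_j lam j *: V j = 0 ->
  i \notin cyclic_part -> lam i = 0.
Proof.
move=> lam_ge0 lamV0 /cyclic_partP i_indep; apply/eqP; rewrite eq_le lam_ge0 andbT.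
by rewrite leNgt; apply/negP => lam_i_gt0; apply: i_indep; exists lam.
Qed.

Lemma cyclic_part_totally_cyclic : totally_cyclic V cyclic_part.
Proof.
have /choice[lam lamP] : forall e, exists mu : 'I_n -> R,
    e \in cyclic_part -> [/\ forall i, 0 <= mu i, 0 < mu e & \sum_i mu i *: V i = 0].
  move=> e; have [/cyclic_partP[mu ?]|e_notin] := boolP (e \in cyclic_part).
    by exists mu.
  by exists (fun=> 0) => /negP.
exists (fun i => \sum_(e in cyclic_part) lam e i); split.
  move=> i i_in; rewrite (bigD1 i) //=; apply: ltr_pwDl; first by case: (lamP i i_in).
  by apply: sumr_ge0 => e /andP[e_in _]; case: (lamP e e_in).
rewrite big_mkcond /= (eq_bigr (fun i => \sum_(e in cyclic_part) lam e i *: V i)).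
  by rewrite exchange_big big1 // => e /lamP[].
move=> i _; rewrite scaler_suml; case: ifP => // /negbT i_notin.
rewrite big1 // => e /lamP[lam_ge0 _ lamV0].
by rewrite (dependence_vanishes_off_cyclic_part lam_ge0 lamV0 i_notin) scale0r.
Qed.

Lemma cyclic_part_separator : exists C : 'rV[R]_r,
  (forall i, 0 <= lfun C (V i)) /\ forall i, i \notin cyclic_part -> 0 < lfun C (V i).
Proof.
have /choice[c cP] : forall e, exists y : 'rV[R]_r, e \notin cyclic_part ->
    (forall i, 0 <= lfun y (V i)) /\ 0 < lfun y (V e).
  move=> e; have [/cyclic_partP e_dep|[c ?]] := dependent_at_or_separated e.
    by exists 0 => /negP.
  by exists c.
have c_ge0 i e : e \in ~: cyclic_part -> 0 <= lfun (c e) (V i).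
  by rewrite inE => /cP[].
exists (\sum_(e in ~: cyclic_part) c e); split=> [i|i i_notin].
  by rewrite lfun_suml; apply: sumr_ge0 => e /c_ge0.
rewrite lfun_suml (bigD1 i) ?in_setC //=; apply: ltr_pwDl; first by case: (cP i i_notin).
by apply: sumr_ge0 => e /andP[/c_ge0].
Qed.

End CyclicPart.

Lemma neg_count_subset (R : realType) (r n : nat) (V : 'I_n -> 'rV[R]_r)
    (S S' : {set 'I_n}) (c : 'rV[R]_r) :
  S \subset S' -> (neg_count V S c <= neg_count V S' c)%N.
Proof.
move=> /subsetP sub_SS'; apply: subset_leq_card; apply/subsetP => i.
by rewrite !inE => /andP[/sub_SS' -> ->].
Qed.

Section Perturbation.
Variables (R : realType) (r n : nat) (V : 'I_n -> 'rV[R]_r).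
Variables (W : {set 'I_n}) (C : 'rV[R]_r).
Hypotheses (C_ge0 : forall i, 0 <= lfun C (V i))
           (C_gt0 : forall i, i \notin W -> 0 < lfun C (V i)).

Lemma neg_count_perturbed (f : 'rV[R]_r) : exists2 T, 0 <= T &
  forall t, T < t -> (neg_count V [set: 'I_n] (t *: C + f) <= neg_count V W f)%N.
Proof.
pose q i : R := `|lfun f (V i)| / lfun C (V i).
have q_ge0 i : i \in ~: W -> 0 <= q i.
  by rewrite in_setC => /C_gt0 Ci_gt0; rewrite divr_ge0 // ltW.
exists (\sum_(i in ~: W) q i); first by apply: sumr_ge0.
move=> t T_lt_t; have t_ge0 : 0 <= t by apply/ltW/(le_lt_trans _ T_lt_t)/sumr_ge0.
apply: subset_leq_card; apply/subsetP => i; rewrite !inE lfunDl lfunZl /= => fi_le.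
have [i_in|i_notin] := boolP (i \in W).
  by have := mulr_ge0 t_ge0 (C_ge0 i); lra.
exfalso.
have qi_le : q i <= \sum_(j in ~: W) q j.
  rewrite (bigD1 i) ?in_setC //= lerDl.
  by apply: sumr_ge0 => j /andP[/q_ge0].
have Ci_gt0 := C_gt0 i_notin.
have : `|lfun f (V i)| < t * lfun C (V i).
  by rewrite -ltr_pdivrMr //; apply: le_lt_trans qi_le T_lt_t.
have := lerNnormlW (lexx `|lfun f (V i)|); lra.
Qed.

Lemma neg_count_perturbed_neq0 (f : 'rV[R]_r) : f != 0 -> exists g,
  g != 0 /\ (neg_count V [set: 'I_n] g <= neg_count V W f)%N.
Proof.
move=> f_neq0; have [T T_ge0 countT] := neg_count_perturbed f.
have [g1_eq0|g1_neq0] := eqVneq ((T + 1) *: C + f) 0; last first.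
  by exists ((T + 1) *: C + f); split=> //; apply: countT; lra.
(* If (T + 1) C + f = 0 then (T + 2) C + f = C, and C <> 0 since f <> 0. *)
exists ((T + 2) *: C + f); split; last by apply: countT; lra.
have -> : (T + 2) *: C + f = C.
  by rewrite -[2]/(1 + 1) addrA scalerDl scale1r addrAC g1_eq0 add0r.
apply: contra f_neq0 => /eqP C0.
by move: g1_eq0; rewrite C0 scaler0 add0r => ->.
Qed.

End Perturbation.

Theorem mainTheorem19 (R : realType) (r n : nat) (V : 'I_n -> 'rV[R]_r)
    (k : nat) :
  dual_codeg_is V [set: 'I_n] k -> (1 <= k)%N ->
  exists W : {set 'I_n}, totally_cyclic V W /\ dual_codeg_is V W k.
Proof.
move=> [[c0 [c0_neq0 c0_count]] codeg_le] _.
have [C [C_ge0 C_gt0]] := cyclic_part_separator V.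
have codeg_le_W f : f != 0 -> (k <= neg_count V (cyclic_part V) f)%N.
  move=> /(neg_count_perturbed_neq0 C_ge0 C_gt0)[g [g_neq0 g_count]].
  exact: leq_trans (codeg_le g g_neq0) g_count.
exists (cyclic_part V); split; first exact: cyclic_part_totally_cyclic.
split=> //; exists c0; split=> //; apply/eqP.
by rewrite eqn_leq codeg_le_W // andbT -c0_count neg_count_subset ?subsetT.
Qed.
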